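(* Let $y_1,y_2,y_3,y_4$ be the corners of the partially folded Miura parallelogram $y^\sigma_\omega(\Omega)$ (for some admissible $\omega\in[-\pi,\pi]$, $\sigma\in\{+,-\}$), and let $u_a=y_3-y_4$, $u_b=y_2-y_1$, $v_a=y_1-y_4$, $v_b=y_2-y_3$. Let $e\in\mathbb{S}^2$, $z\in\mathbb{R}^3$ with $z\cdot e=0$, $\theta_1,\theta_2\in(-\pi,\pi]$, $\tau_1,\tau_2\in\mathbb{R}$, let $R_\theta$ denote the right-hand rotation about $e$ by angle $\theta$, $P_e=I-e\otimes e$, and $g_i(x)=R_{\theta_i}(x-z)+\tau_i e+z$ ($i=1,2$). If $\theta_1\neq0$, then $$g_1(y_4)=y_1,\quad g_1(y_3)=y_2,\quad g_2(y_1)=y_2,\quad g_2(y_4)=y_3$$ holds if and only if $$\tau_1=v_a\cdot e,\ \ \tau_2=u_a\cdot e,\ \ (u_a-u_b)\cdot e=0,\ \ R_{\theta_1}P_eu_a=P_eu_b,\ \ R_{\theta_2}P_ev_a=P_ev_b,\ \ (I-R_{\theta_1})z=P_e(y_2-R_{\theta_1}y_3).$$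
   Context: Setting. $\{e_1,e_2,e_3\}$ is the standard basis of $\mathbb{R}^3$. Fix $\eta\in(0,\pi)$, $l>0$; set $x_1=0$, $x_2=e_1$, $x_4=l(\cos\eta\,e_1+\sin\eta\,e_2)$, $x_3=x_2+x_4$, and let $\Omega$ be the planar parallelogram with these corners. Fix $\lambda_1,\lambda_2\in(0,1)$ with $(\lambda_2-1)\lambda_2l^2=(\lambda_1-1)\lambda_1$ and let $x_0=\lambda_1x_2+\lambda_2x_4$ (the interior crease vertex). Let $t_i=(x_i-x_0)/|x_i-x_0|$, $n_i=-(t_i\cdot e_2)e_1+(t_i\cdot e_1)e_2$, $\alpha=\arccos(t_1\cdot t_2)$, $\beta=\arccos(t_2\cdot t_3)$, and $R_i(\gamma)=t_i\otimes t_i+\cos\gamma(n_i\otimes n_i+e_3\otimes e_3)+\sin\gamma(e_3\otimes n_i-n_i\otimes e_3)$. Let $\mathcal{A}=\emptyset$ if $\alpha=\beta=\pi/2$, $\{-\}$ if $\alpha=\beta\ne\pi/2$, $\{+\}$ if $\alpha=\pi-\beta\neq\pi/2$, $\{+,-\}$ otherwise. For $\sigma\in\{+,-\}$ (identified with $\pm1$) and $\omega\in[-\pi,\pi]$ the folding angles are: if $\sigma\in\mathcal{A}$, $\gamma_1=-\sigma\bar\gamma_3^\sigma(\omega)$, $\gamma_2=\sigma\omega$, $\gamma_3=\bar\gamma_3^\sigma(\omega)$, $\gamma_4=\omega$ with $\bar\gamma_3^{\sigma}(\omega)=\mathrm{sign}((\cos\alpha-\sigma\cos\beta)\omega)\arccos\big(\frac{(\sigma1-\cos\alpha\cos\beta)\cos\omega+\sin\alpha\sin\beta}{(\sigma1-\cos\alpha\cos\beta)+\sin\alpha\sin\beta\cos\omega}\big)$;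 if $\sigma\notin\mathcal{A}$ (possible only for $\sigma=+,\alpha=\beta$ or $\sigma=-,\alpha=\pi-\beta$), $\gamma_1=\gamma_3=0,\gamma_2=\gamma_4=\omega$ when $\sigma=+$ and $\gamma_1=\gamma_3=\omega,\gamma_2=\gamma_4=0$ when $\sigma=-$. The folded parallelogram $y^\sigma_\omega(\Omega)$ is the piecewise-rigid image of $\Omega$ that is the identity on the triangle $\mathrm{conv}\{x_1,x_0,x_2\}$, equals $x\mapsto R_2(\gamma_2)(x-x_0)+x_0$ on $\mathrm{conv}\{x_2,x_0,x_3\}$, $x\mapsto R_2(\gamma_2)R_3(\gamma_3)(x-x_0)+x_0$ on $\mathrm{conv}\{x_3,x_0,x_4\}$ and $x\mapsto R_1(-\gamma_1)(x-x_0)+x_0$ on $\mathrm{conv}\{x_4,x_0,x_1\}$. Its corners are $y_1=x_1$, $y_2=x_2$, $y_3=x_0+R_2(\gamma_2)(x_3-x_0)$, $y_4=x_0+R_2(\gamma_2)R_3(\gamma_3)(x_4-x_0)$. *)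

From Stdlib Require Import Reals Lra.
Open Scope R_scope.

Record vec3 := V3 { vx : R; vy : R; vz : R }.

Definition vadd (a b : vec3) : vec3 := V3 (vx a + vx b) (vy a + vy b) (vz a + vz b).
Definition vscale (c : R) (a : vec3) : vec3 := V3 (c * vx a) (c * vy a) (c * vz a).
Definition vopp (a : vec3) : vec3 := vscale (-1) a.
Definition vsub (a b : vec3) : vec3 := vadd a (vopp b).
Definition vzero : vec3 := V3 0 0 0.
Definition dot (a b : vec3) : R := vx a * vx b + vy a * vy b + vz a * vz b.
Definition cross (a b : vec3) : vec3 :=
  V3 (vy a * vz b - vz a * vy b) (vz a * vx b - vx a * vz b) (vx a * vy b - vy a * vx b).
Definition vnorm (a : vec3) : R := sqrt (dot a a).

Definition e1 : vec3 := V3 1 0 0.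
Definition e2 : vec3 := V3 0 1 0.
Definition e3 : vec3 := V3 0 0 1.

Definition sgn (x : R) : R :=
  if Rlt_dec 0 x then 1 else if Rlt_dec x 0 then -1 else 0.

Definition px1 : vec3 := vzero.
Definition px2 : vec3 := e1.
Definition px4 (eta l : R) : vec3 := vscale l (vadd (vscale (cos eta) e1) (vscale (sin eta) e2)).
Definition px3 (eta l : R) : vec3 := vadd px2 (px4 eta l).
Definition px0 (eta l lam1 lam2 : R) : vec3 := vadd (vscale lam1 px2) (vscale lam2 (px4 eta l)).

Definition pcorner (eta l : R) (i : nat) : vec3 :=
  match i with 1 => px1 | 2 => px2 | 3 => px3 eta l | _ => px4 eta l end.

Definition tvec (eta l lam1 lam2 : R) (i : nat) : vec3 :=
  let d := vsub (pcorner eta l i) (px0 eta l lam1 lam2) in vscale (/ vnorm d) d.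
Definition nvec (eta l lam1 lam2 : R) (i : nat) : vec3 :=
  let t := tvec eta l lam1 lam2 i in
  vadd (vscale (- dot t e2) e1) (vscale (dot t e1) e2).

Definition alpha (eta l lam1 lam2 : R) : R :=
  acos (dot (tvec eta l lam1 lam2 1) (tvec eta l lam1 lam2 2)).
Definition beta (eta l lam1 lam2 : R) : R :=
  acos (dot (tvec eta l lam1 lam2 2) (tvec eta l lam1 lam2 3)).

(* R_i(gamma) = t_i (x) t_i + cos g (n_i (x) n_i + e3 (x) e3)
                 + sin g (e3 (x) n_i - n_i (x) e3), with (a (x) b) x = (b.x) a *)
Definition Rfold (eta l lam1 lam2 : R) (i : nat) (g : R) (x : vec3) : vec3 :=
  let t := tvec eta l lam1 lam2 i in
  let n := nvec eta l lam1 lam2 i in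
  vadd (vscale (dot t x) t)
   (vadd (vscale (cos g) (vadd (vscale (dot n x) n) (vscale (dot e3 x) e3)))
         (vscale (sin g) (vsub (vscale (dot n x) e3) (vscale (dot e3 x) n)))).

(** sigma : bool, true = '+' (= +1), false = '-' (= -1). *)
Definition sigR (s : bool) : R := if s then 1 else -1.

(* membership of sigma in the set A of the paper:
   A = {} if a = b = pi/2; {-} if a = b <> pi/2; {+} if a = pi - b <> pi/2;
   {+,-} otherwise. *)
Definition inA (a b : R) (s : bool) : Prop :=
  (a = PI/2 /\ b = PI/2 /\ False) \/
  (~ (a = PI/2 /\ b = PI/2) /\ (a = b /\ b <> PI/2) /\ s = false) \/
  (~ (a = PI/2 /\ b = PI/2) /\ (a = PI - b /\ a <> PI/2) /\ s = true) \/
  (~ (a = PI/2 /\ b = PI/2) /\ ~ (a = b /\ b <> PI/2) /\ ~ (a = PI - b /\ a <> PI/2)).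

Definition gamma3bar (a b : R) (s : bool) (w : R) : R :=
  let sg := sigR s in
  sgn ((cos a - sg * cos b) * w) *
  acos (((sg - cos a * cos b) * cos w + sin a * sin b) /
        ((sg - cos a * cos b) + sin a * sin b * cos w)).

Definition folding_angles (a b : R) (s : bool) (w : R) : R * R * R * R :=
  (- sigR s * gamma3bar a b s w, sigR s * w, gamma3bar a b s w, w).

Definition folding_angles_notA (s : bool) (w : R) : R * R * R * R :=
  if s then (0, w, 0, w) else (w, 0, w, 0).

Definition is_folding_angles (eta l lam1 lam2 : R) (s : bool) (w : R)
  (G : R * R * R * R) : Prop :=
  let a := alpha eta l lam1 lam2 in
  let b := beta eta l lam1 lam2 in
  (inA a b s -> G = folding_angles a b s w) /\
  (~ inA a b s -> G = folding_angles_notA s w).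

Definition fcorner (eta l lam1 lam2 : R) (G : R * R * R * R) (i : nat) : vec3 :=
  let '(g1, g2, g3, g4) := G in
  let x0 := px0 eta l lam1 lam2 in
  match i with
  | 1 => px1
  | 2 => px2
  | 3 => vadd x0 (Rfold eta l lam1 lam2 2 g2 (vsub (px3 eta l) x0))
  | _ => vadd x0 (Rfold eta l lam1 lam2 2 g2
                    (Rfold eta l lam1 lam2 3 g3 (vsub (px4 eta l) x0)))
  end.

(* right-hand rotation about the unit axis e by angle th (Rodrigues) *)
Definition rot (e : vec3) (th : R) (x : vec3) : vec3 :=
  vadd (vscale (cos th) x)
    (vadd (vscale (sin th) (cross e x)) (vscale ((1 - cos th) * dot e x) e)).

Definition proj (e : vec3) (x : vec3) : vec3 := vsub x (vscale (dot e x) e).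

Definition screw (e z : vec3) (th tau : R) (x : vec3) : vec3 :=
  vadd (vadd (rot e th (vsub x z)) (vscale tau e)) z.

(* Decompose every point into its component along e and its projection onto
   the plane e^perp.  Along e a screw motion is a translation by tau, on the
   plane it is the rotation h(p) = R (p - z) + z about z, and rotations about
   a common centre commute.  The four matching conditions thus split into
   conditions on the heights, which give the three scalar equations, and
   conditions on the projections.  There, h1 P y3 = P y2 is the condition on
   z, and subtracting h1 P y4 = P y1 from it gives R1 P ua = P ub; likewise
   the g2 conditions give R2 P va = P vb.  Conversely, the defect
   w := h2 P y1 - P y2 = h2 P y4 - P y3 satisfies
   R1 w = h1 h2 P y4 - h1 P y3 = h2 h1 P y4 - P y2 = w, and a vector of
   e^perp fixed by a rotation of angle th1 <> 0 vanishes.  Nothing about the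
   Miura fold is used: the equivalence holds for any four points. *)
From Stdlib Require Import Reals Lra Nsatz.
Open Scope R_scope.

Ltac vec3_expand :=
  repeat match goal with v : vec3 |- _ => destruct v end;
  unfold screw, rot, proj, vsub, vopp, vadd, vscale, vzero, dot, cross in *;
  simpl in *.

Lemma vec3_eq (a b c a' b' c' : R) :
  a = a' -> b = b' -> c = c' -> V3 a b c = V3 a' b' c'.
Proof. intros -> -> ->; reflexivity. Qed.

Lemma vsub_eq0 (a b : vec3) : vsub a b = vzero -> a = b.
Proof. vec3_expand; intro H; injection H; intros; apply vec3_eq; lra. Qed.

Lemma vsub_cancel_r (a b c : vec3) : vsub a c = vsub b c -> a = b.
Proof. vec3_expand; intro H; injection H; intros; apply vec3_eq; lra. Qed.

Lemma vsub_cancel_l (a b c : vec3) : vsub a b = vsub a c -> b = c.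
Proof. vec3_expand; intro H; injection H; intros; apply vec3_eq; lra. Qed.

Lemma vsub_eq_swap (a b c d : vec3) : vsub a b = vsub c d -> vsub a c = vsub b d.
Proof. vec3_expand; intro H; injection H; intros; apply vec3_eq; lra. Qed.

Lemma vadd_0_r (a : vec3) : vadd a vzero = a.
Proof. vec3_expand; apply vec3_eq; ring. Qed.

Lemma dot_sub (x y e : vec3) : dot (vsub x y) e = dot x e - dot y e.
Proof. vec3_expand; ring. Qed.

Lemma dot_self_nonneg (x : vec3) : 0 <= dot x x.
Proof. vec3_expand; nra. Qed.

Lemma dot_self_unit (e : vec3) : vnorm e = 1 -> dot e e = 1.
Proof.
  intro He. symmetry.
  rewrite <- (Rmult_1_l 1).
  exact (sqrt_lem_0 _ _ (dot_self_nonneg e) Rle_0_1 He).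
Qed.

Lemma proj_sub (e x y : vec3) : proj e (vsub x y) = vsub (proj e x) (proj e y).
Proof. vec3_expand; apply vec3_eq; ring. Qed.

Lemma proj_add (e x y : vec3) : proj e (vadd x y) = vadd (proj e x) (proj e y).
Proof. vec3_expand; apply vec3_eq; ring. Qed.

Lemma proj_scale_axis (e : vec3) (c : R) : dot e e = 1 -> proj e (vscale c e) = vzero.
Proof. vec3_expand; intro; apply vec3_eq; nsatz. Qed.

Lemma dot_proj (e x : vec3) : dot e e = 1 -> dot (proj e x) e = 0.
Proof. vec3_expand; intro; nsatz. Qed.

Lemma proj_orthogonal (e z : vec3) : dot z e = 0 -> proj e z = z.
Proof. vec3_expand; intro; apply vec3_eq; nsatz. Qed.

Lemma proj_rot (e x : vec3) (t : R) :
  dot e e = 1 -> proj e (rot e t x) = rot e t (proj e x).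
Proof. vec3_expand; intro; apply vec3_eq; nsatz. Qed.

Lemma rot_comm (e x : vec3) (t1 t2 : R) :
  dot e e = 1 -> rot e t1 (rot e t2 x) = rot e t2 (rot e t1 x).
Proof. vec3_expand; intro; apply vec3_eq; nsatz. Qed.

Lemma dot_rot_self (e w : vec3) (t : R) :
  dot (rot e t w) w = cos t * dot w w + (1 - cos t) * dot e w ^ 2.
Proof. vec3_expand; ring. Qed.

Lemma rot_fixed_orthogonal_eq0 (e w : vec3) (t : R) :
  cos t <> 1 -> dot w e = 0 -> rot e t w = w -> w = vzero.
Proof.
  intros Hcos Hwe Hfix.
  assert (Hew : dot e w = 0) by (rewrite <- Hwe; vec3_expand; ring).
  pose proof (dot_rot_self e w t) as Hww.
  rewrite Hfix, Hew in Hww.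
  assert (Hw0 : dot w w = 0).
  { apply (Rmult_eq_reg_l (1 - cos t)); lra. }
  vec3_expand; apply vec3_eq; nra.
Qed.

Lemma cos_neq_1 (t : R) : -PI < t <= PI -> t <> 0 -> cos t <> 1.
Proof.
  intros Ht Ht0 Hcos; apply Ht0.
  destruct (Rle_dec 0 t).
  - apply cos_inj; [lra | lra |]. now rewrite cos_0.
  - enough (-t = 0) by lra.
    apply cos_inj; [lra | lra |]. now rewrite cos_neg, cos_0.
Qed.

Definition hrot (e z : vec3) (t : R) (p : vec3) : vec3 :=
  vadd (rot e t (vsub p z)) z.

Lemma rot_vsub_hrot (e z p q : vec3) (t : R) :
  rot e t (vsub p q) = vsub (hrot e z t p) (hrot e z t q).
Proof. unfold hrot; vec3_expand; apply vec3_eq; ring. Qed.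

Lemma dot_hrot (e z p : vec3) (t : R) :
  dot e e = 1 -> dot (hrot e z t p) e = dot p e.
Proof. unfold hrot; vec3_expand; intro; nsatz. Qed.

Lemma hrot_sub_center (e z p : vec3) (t : R) :
  vsub (hrot e z t p) z = rot e t (vsub p z).
Proof. unfold hrot; vec3_expand; apply vec3_eq; ring. Qed.

Lemma hrot_comm (e z p : vec3) (t1 t2 : R) :
  dot e e = 1 -> hrot e z t1 (hrot e z t2 p) = hrot e z t2 (hrot e z t1 p).
Proof.
  intro He; apply (vsub_cancel_r _ _ z).
  now rewrite !hrot_sub_center, (rot_comm _ _ _ _ He).
Qed.

Lemma hrot_center_iff (e z p q : vec3) (t : R) :
  vsub z (rot e t z) = vsub q (rot e t p) <-> hrot e z t p = q.
Proof.
  unfold hrot; vec3_expand; split; intro H; injection H; intros;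
    apply vec3_eq; lra.
Qed.

Lemma vec3_eq_of_dot_proj (e x y : vec3) :
  dot x e = dot y e -> proj e x = proj e y -> x = y.
Proof.
  vec3_expand; intros Hh Hp; injection Hp as Hx Hy Hz; apply vec3_eq; nsatz.
Qed.

Lemma dot_screw (e z x : vec3) (t tau : R) :
  dot e e = 1 -> dot (screw e z t tau x) e = dot x e + tau.
Proof. vec3_expand; intro; nsatz. Qed.

Lemma proj_screw (e z x : vec3) (t tau : R) :
  dot e e = 1 -> dot z e = 0 ->
  proj e (screw e z t tau x) = hrot e z t (proj e x).
Proof.
  intros He Hz; unfold screw, hrot.
  rewrite !proj_add, (proj_rot _ _ _ He), proj_sub, (proj_orthogonal _ _ Hz),
    (proj_scale_axis _ _ He), vadd_0_r.
  reflexivity.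
Qed.

Lemma screw_eq_iff (e z x y : vec3) (t tau : R) :
  dot e e = 1 -> dot z e = 0 ->
  screw e z t tau x = y <->
  dot x e + tau = dot y e /\ hrot e z t (proj e x) = proj e y.
Proof.
  intros He Hz; split.
  - intros <-. now rewrite dot_screw, proj_screw.
  - intros [Hh Hp]; apply (vec3_eq_of_dot_proj e).
    + now rewrite dot_screw.
    + now rewrite proj_screw.
Qed.

Lemma hrot_pair_complete (e z p1 p2 p3 p4 : vec3) (th1 th2 : R) :
  dot e e = 1 -> cos th1 <> 1 -> dot p1 e = 0 -> dot p2 e = 0 ->
  hrot e z th1 p4 = p1 -> hrot e z th1 p3 = p2 ->
  vsub (hrot e z th2 p1) (hrot e z th2 p4) = vsub p2 p3 ->
  hrot e z th2 p1 = p2.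
Proof.
  intros He Hcos Hp1 Hp2 H14 H13 H2.
  set (w := vsub (hrot e z th2 p1) p2).
  assert (Hwe : dot w e = 0).
  { unfold w; rewrite dot_sub, (dot_hrot _ _ _ _ He); lra. }
  assert (Hfix : rot e th1 w = w).
  { unfold w at 1.
    rewrite (vsub_eq_swap _ _ _ _ H2), (rot_vsub_hrot e z),
      (hrot_comm _ _ _ _ _ He), H14, H13.
    reflexivity. }
  apply vsub_eq0, (rot_fixed_orthogonal_eq0 e w th1 Hcos Hwe Hfix).
Qed.

Lemma screw_pair_maps_iff (e z y1 y2 y3 y4 : vec3) (th1 th2 tau1 tau2 : R) :
  dot e e = 1 -> dot z e = 0 -> cos th1 <> 1 ->
  (screw e z th1 tau1 y4 = y1 /\ screw e z th1 tau1 y3 = y2 /\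
   screw e z th2 tau2 y1 = y2 /\ screw e z th2 tau2 y4 = y3) <->
  (tau1 = dot (vsub y1 y4) e /\ tau2 = dot (vsub y3 y4) e /\
   dot (vsub (vsub y3 y4) (vsub y2 y1)) e = 0 /\
   rot e th1 (proj e (vsub y3 y4)) = proj e (vsub y2 y1) /\
   rot e th2 (proj e (vsub y1 y4)) = proj e (vsub y2 y3) /\
   vsub z (rot e th1 z) = proj e (vsub y2 (rot e th1 y3))).
Proof.
  intros He Hz Hcos.
  rewrite !(screw_eq_iff _ _ _ _ _ _ He Hz), !dot_sub, !proj_sub,
    (proj_rot _ _ _ He), !(rot_vsub_hrot e z), (hrot_center_iff e z).
  split.
  - intros ([? H14] & [? H13] & [? H21] & [? H24]).
    rewrite H14, H13, H21, H24.
    repeat split; lra.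
  - intros (T1 & T2 & T3 & H1 & H2 & H13).
    assert (H14 : hrot e z th1 (proj e y4) = proj e y1).
    { rewrite H13 in H1; exact (vsub_cancel_l _ _ _ H1). }
    pose proof (hrot_pair_complete e z _ _ _ _ th1 th2 He Hcos
                  (dot_proj _ _ He) (dot_proj _ _ He) H14 H13 H2) as H21.
    assert (H24 : hrot e z th2 (proj e y4) = proj e y3).
    { rewrite H21 in H2; exact (vsub_cancel_l _ _ _ H2). }
    repeat split; try lra; assumption.
Qed.

Theorem mainTheorem3
  (eta l lam1 lam2 : R) (sigma : bool) (omega : R) (G : R * R * R * R)
  (e z : vec3) (th1 th2 tau1 tau2 : R) :
  0 < eta < PI -> 0 < l ->
  0 < lam1 < 1 -> 0 < lam2 < 1 ->
  (lam2 - 1) * lam2 * l ^ 2 = (lam1 - 1) * lam1 ->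
  -PI <= omega <= PI ->
  is_folding_angles eta l lam1 lam2 sigma omega G ->
  vnorm e = 1 -> dot z e = 0 ->
  -PI < th1 <= PI -> -PI < th2 <= PI ->
  th1 <> 0 ->
  let y1 := fcorner eta l lam1 lam2 G 1 in
  let y2 := fcorner eta l lam1 lam2 G 2 in
  let y3 := fcorner eta l lam1 lam2 G 3 in
  let y4 := fcorner eta l lam1 lam2 G 4 in
  let ua := vsub y3 y4 in
  let ub := vsub y2 y1 in
  let va := vsub y1 y4 in
  let vb := vsub y2 y3 in
  let g1 := screw e z th1 tau1 in
  let g2 := screw e z th2 tau2 in
  (g1 y4 = y1 /\ g1 y3 = y2 /\ g2 y1 = y2 /\ g2 y4 = y3) <->
  (tau1 = dot va e /\ tau2 = dot ua e /\ dot (vsub ua ub) e = 0 /\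
   rot e th1 (proj e ua) = proj e ub /\
   rot e th2 (proj e va) = proj e vb /\
   vsub z (rot e th1 z) = proj e (vsub y2 (rot e th1 y3))).
Proof.
  intros _ _ _ _ _ _ _ He Hz Hth1 _ Hth1_0 y1 y2 y3 y4.
  exact (screw_pair_maps_iff e z y1 y2 y3 y4 th1 th2 tau1 tau2
           (dot_self_unit e He) Hz (cos_neq_1 th1 Hth1 Hth1_0)).
Qed.
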